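(* Let $Q$ be a countable set, $(F_i)_{i\in I}$ a family of real-valued maps on $Q$ and $(k_i)_{i\in I}$ a bounded family of nonnegative real numbers such that $\sum_{t\in S}|F_i(t)|\le k_i\mod c_0(I)$ for every finite subset $S$ of $Q$. Then $(F_i)_{i\in I}$ is of type $c_0\ell_1$ bounded by $(k_i)_{i\in I}$.
   Context: $c_0(I)$ is the set of real families $(a_i)_{i\in I}$ with $\{i:|a_i|\ge\varepsilon\}$ finite for all $\varepsilon>0$ (written $\lim_{i\in I}a_i=0$). ''$x_i\le y_i\mod c_0(I)$'' means there is $(z_i)\in c_0(I)$ with $x_i\le y_i+z_i$ for all $i$, i.e. $\{i:x_i\ge y_i+\varepsilon\}$ is finite for every $\varepsilon>0$. $(F_i)_{i\in I}$ is of type $c_0\ell_1$ bounded by $(k_i)$ if $F_i(t)=a_{i,t}+b_{i,t}$ for $i\in I$, $t\in Q$, with $\lim_{i\in I}a_{i,t}=0$ for each $t\in Q$ and $\sum_{t\in Q}|b_{i,t}|\le k_i$ for each $i\in I$. *)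

From HB Require Import structures.
From mathcomp Require Import all_boot all_order all_algebra.
From mathcomp Require Import all_classical all_reals all_analysis.
Set Implicit Arguments. Unset Strict Implicit. Unset Printing Implicit Defensive.
Import Order.TTheory GRing.Theory Num.Theory.
Local Open Scope classical_set_scope.
Local Open Scope ring_scope.

Definition le_mod_c0 (R : realType) (I : Type) (x y : I -> R) : Prop :=
  forall eps : R, 0 < eps -> finite_set [set i | y i + eps <= x i].

Definition c0_lim (R : realType) (I : Type) (a : I -> R) : Prop :=
  forall eps : R, 0 < eps -> finite_set [set i | eps <= `|a i|].

Definition type_c0l1 (R : realType) (I : Type) (Q : choiceType)
    (F : I -> Q -> R) (k : I -> R) : Prop :=
  exists (a b : I -> Q -> R),
    (forall i t, F i t = a i t + b i t) /\
    (forall t, c0_lim (fun i => a i t)) /\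
    (forall i, (\esum_(t in [set: Q]) (`|b i t|)%:E <= (k i)%:E)%E).

From HB Require Import structures.
From mathcomp Require Import all_boot all_order all_algebra.
From mathcomp Require Import all_classical all_reals all_analysis.
From mathcomp Require finmap.
From mathcomp Require Import ring.
Set Implicit Arguments.
Unset Strict Implicit.
Unset Printing Implicit Defensive.
Import Order.TTheory GRing.Theory Num.Theory.
Local Open Scope classical_set_scope.
Local Open Scope ring_scope.

(* Enumerate Q and let s_i(n) be the sum of |F_i| over the first n points.
   Each i "stops" at the first level N with s_i(N) >= k_i + 1/(N+1); by
   hypothesis only finitely many i stop at any given level.  If i never stops,
   every finite sum of |F_i| is at most k_i and we take b_i = F_i; if it stops
   at N > 0, b_i is F_i restricted to the first N-1 points and scaled by
   k_i/(k_i + 1/N), which has l_1 norm at most k_i and differs from F_i by at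
   most 1/N on those points.  At a fixed t, |F_i(t) - b_i(t)| is therefore
   small except for the finitely many i that stop early. *)

Lemma first_hitting (P : nat -> Prop) :
  (forall n, ~ P n) \/ exists n, P n /\ forall j, (j < n)%N -> ~ P j.
Proof.
have [[n Pn]|noP] := pselect (exists n, P n); last first.
  by left => n Pn; apply: noP; exists n.
right; have exP : exists n, `[< P n >] by exists n; apply/asboolP.
case: (ex_minnP exP) => m /asboolP Pm m_min; exists m; split=> // j jm.
by move=> /asboolP /m_min; rewrite leqNgt jm.
Qed.

Section finite_sums.
Variables (R : realType) (T : choiceType).

Lemma ler_fsum_subset (A B : set T) (f : T -> R) :
  finite_set B -> A `<=` B -> (forall t, 0 <= f t) ->
  \sum_(t \in A) f t <= \sum_(t \in B) f t.
Proof.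
move=> finB AB f_ge0; have finA := sub_finite_set AB finB.
rewrite -lee_fin -!fsumEFin //; apply: lee_fsum_nneg_subset => //.
  exact/subsetP.
by move=> t _; rewrite lee_fin.
Qed.

Lemma ler_fsum_term (A : set T) (f : T -> R) (x : T) :
  finite_set A -> A x -> (forall t, 0 <= f t) ->
  f x <= \sum_(t \in A) f t.
Proof.
move=> finA Ax f_ge0; rewrite (fsbigD1 x) //= lerDl.
by apply: fsumr_ge0 => t _.
Qed.

Definition shrink (A : set T) (c : R) (f : T -> R) (t : T) : R :=
  if t \in A then c * f t else 0.

Variables (A : set T) (f : T -> R) (k d : R).
Hypotheses (finA : finite_set A) (k_ge0 : 0 <= k) (d_gt0 : 0 < d).
Hypothesis sumA_le : \sum_(t \in A) `|f t| <= k + d.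

Let kd_gt0 : 0 < k + d. Proof. exact: ltr_wpDl. Qed.

Lemma esum_shrink_le :
  (\esum_(t in [set: T]) (`|shrink A (k / (k + d)) f t|)%:E <= k%:E)%E.
Proof.
have c_ge0 : 0 <= k / (k + d) by rewrite divr_ge0 // ltW.
rewrite (eq_esum (b := fun t => if t \in A then (k / (k + d) * `|f t|)%:E
                                  else 0%E)); last first.
  by move=> t _; rewrite /shrink; case: ifP; rewrite ?normr0 // normrM ger0_norm.
rewrite -esum_mkcond esum_fset //; last by move=> t _; rewrite lee_fin mulr_ge0.
rewrite fsumEFin // lee_fin -mulr_fsumr mulrAC ler_pdivrMr //.
exact: ler_wpM2l.
Qed.

Lemma dist_shrink_le t : A t -> `|f t - shrink A (k / (k + d)) f t| <= d.
Proof.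
move=> At; rewrite /shrink (mem_set At).
have -> : f t - k / (k + d) * f t = f t * (d / (k + d)) by field; rewrite gt_eqF.
rewrite normrM (ger0_norm (x := d / _)); last by rewrite divr_ge0 ?ltW.
rewrite mulrA ler_pdivrMr // mulrC ler_pM2l //.
apply: le_trans sumA_le; exact: (@ler_fsum_term A (fun t => `|f t|)).
Qed.

End finite_sums.

Section prefixes.
Context {Q : countType}.

Definition prefix (n : nat) : set Q := [set t | (pickle t < n)%N].

Lemma finite_prefix n : finite_set (prefix n).
Proof.
apply: (finite_preimage (B := `I_n)); last exact: finite_II.
by move=> x y _ _; exact: (pcan_inj pickleK).
Qed.

Lemma subset_prefix m n : (m <= n)%N -> prefix m `<=` prefix n.
Proof. by move=> mn t /= tm; exact: leq_trans tm mn. Qed.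

Lemma finite_subset_prefix (X : set Q) : finite_set X -> exists n, X `<=` prefix n.
Proof.
move=> /finite_fsetP[B ->]; exists (\max_(t <- finmap.enum_fset B) (pickle t).+1)%N.
by move=> t /= tB; exact: (leq_bigmax_seq (F := fun t => (pickle t).+1)).
Qed.

End prefixes.

Section tolerances.
Context {R : realType}.

Definition tol (n : nat) : R := n.+1%:R^-1.

Lemma tol_gt0 n : 0 < tol n.
Proof. by rewrite invr_gt0 ltr0Sn. Qed.

Lemma tol_le m n : (m <= n)%N -> tol n <= tol m.
Proof. by move=> mn; rewrite lef_pV2 ?posrE ?ltr0Sn // ler_nat ltnS. Qed.

Lemma tol_lt (eps : R) : 0 < eps -> exists n, tol n < eps.
Proof. by move=> /ltr_add_invr[n]; rewrite add0r; exists n. Qed.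

End tolerances.

Section splitting.
Variables (R : realType) (Q : countType).

Definition prefix_sum (f : Q -> R) (n : nat) : R := \sum_(t \in prefix n) `|f t|.

Definition overshoot (k : R) (f : Q -> R) (n : nat) : Prop :=
  k + tol n <= prefix_sum f n.

Variables (f : Q -> R) (k : R).
Hypothesis k_ge0 : 0 <= k.

Lemma esum_le_of_no_overshoot : (forall n, ~ overshoot k f n) ->
  (\esum_(t in [set: Q]) (`|f t|)%:E <= k%:E)%E.
Proof.
move=> no_over; apply: ge_ereal_sup => _ [X [finX _] <-].
rewrite fsumEFin // lee_fin; apply/ler_addgt0Pr => eps eps_gt0.
have [n0 Xn0] := finite_subset_prefix finX.
have [m tol_m] := tol_lt eps_gt0.
pose n := maxn m n0.
have Xn : X `<=` prefix n := subset_trans Xn0 (subset_prefix (leq_maxr m n0)).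
have sum_lt : prefix_sum f n < k + tol n by rewrite ltNge; apply/negP/no_over.
apply: le_trans (ler_fsum_subset (finite_prefix n) Xn (fun t => normr_ge0 (f t))) _.
apply: (le_trans (ltW sum_lt)); rewrite lerD2l.
exact: le_trans (tol_le (leq_maxl m n0)) (ltW tol_m).
Qed.

Lemma c0l1_split : exists b : Q -> R,
  (\esum_(t in [set: Q]) (`|b t|)%:E <= k%:E)%E /\
  forall n, (forall j, (j <= n)%N -> ~ overshoot k f j) ->
  forall t, prefix n t -> `|f t - b t| <= tol n.
Proof.
have [no_over|[[|N] [over_N before_N]]] := first_hitting (overshoot k f).
- exists f; split; first exact: esum_le_of_no_overshoot.
  by move=> n _ t _; rewrite subrr normr0 ltW ?tol_gt0.
- exists (fun=> 0); split; first by rewrite esum1 // => t _; rewrite normr0.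
  by move=> n /(_ 0%N (leq0n n)).
- have sum_le : prefix_sum f N <= k + tol N.
    by rewrite leNgt; apply/negP => /ltW; exact: before_N.
  exists (shrink (prefix N) (k / (k + tol N)) f); split.
    exact: esum_shrink_le (finite_prefix N) k_ge0 (tol_gt0 N) sum_le.
  move=> n before_n t tn.
  have nN : (n <= N)%N.
    by rewrite leqNgt; apply/negP => Nn; exact: before_n N.+1 Nn over_N.
  apply: le_trans (tol_le nN).
  exact: dist_shrink_le (finite_prefix N) k_ge0 (tol_gt0 N) sum_le _
    (subset_prefix nN tn).
Qed.

End splitting.

Theorem proposition2p11 (R : realType) (I : Type) (Q : countType)
    (F : I -> Q -> R) (k : I -> R) :
  (forall i, 0 <= k i) ->
  (exists M : R, forall i, k i <= M) ->
  (forall S : set Q, finite_set S ->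
     le_mod_c0 (fun i => \sum_(t \in S) `|F i t|) k) ->
  type_c0l1 F k.
Proof.
move=> k_ge0 _ F_le_k.
have /choice[b bP] := fun i => c0l1_split (F i) (k_ge0 i).
exists (fun i t => F i t - b i t), b; split; first by move=> i t; rewrite subrK.
split=> [t eps eps_gt0|i]; last exact: (bP i).1.
have [m tol_m] := tol_lt eps_gt0; pose n := maxn m (pickle t).+1.
pose over_until_n := \bigcup_(j in `I_n.+1) [set i | overshoot (k i) (F i) j].
apply: (@sub_finite_set _ _ over_until_n); last first.
  apply: bigcup_finite => [|j _]; first exact: finite_II.
  exact: F_le_k (finite_prefix j) (tol j) (tol_gt0 j).
move=> i /=; apply: contraPP => not_over.
have tn : prefix n t by exact: leq_maxr.
apply/negP; rewrite -ltNge; apply: le_lt_trans ((bP i).2 n _ t tn) _.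
  by move=> j jn over_j; apply: not_over; exists j.
exact: le_lt_trans (tol_le (leq_maxl _ _)) tol_m.
Qed.
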